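(* Let $\langle A,\to\rangle$ be a conditional algebra. For $a\in A$ let $Q_a$, $[Q_a]$ be defined as in the context, and for $U,V\subseteq\mathrm{Ul}(A)$ let $\Box_U(V)=U\to_{T_A}V$. Then: (1) for every $a\in A$, $[Q_a]=\Box_{\varphi(a)}$; (2) for all $U,V\subseteq\mathrm{Ul}(A)$, $$\Box_U(V)=\bigcap_{(Y,O)}\ \bigcup_{\substack{a\in F_Y,\ b\in I_O}}\Box_{\varphi(a)}(\varphi(b))=\bigcap_{(Y,O)}\ \bigcup_{a\in F_Y}[Q_a](O),$$ where $(Y,O)$ ranges over pairs with $Y\subseteq U$ closed and $O\supseteq V$ open in the Stone space of $A$, $F_Y=\{a\in A: Y\subseteq\varphi(a)\}$ and $I_O=\{b\in A:\varphi(b)\subseteq O\}$.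
   Context: A conditional algebra is a pair $\langle A,\to\rangle$ where $A$ is a Boolean algebra and $\to$ is a binary operation with, for all $a,b,c$: $a\to 1=1$; $(a\to b)\wedge(a\to c)=a\to(b\wedge c)$; $(a\vee b)\to c\le (a\to c)\wedge(b\to c)$. $\mathrm{Ul}(A)$ is the Stone space of ultrafilters, $\varphi(a)=\{u:a\in u\}$; filters include the improper filter $A$, and $\varphi(F)=\{u:F\subseteq u\}$. $D^{\to}_X(Y)=\{b:\exists a\in Y,\ a\to b\in X\}$. $T_A(u,Z,v)$ iff there is a filter $F$ with $Z=\varphi(F)$ and $D^{\to}_u(F)\subseteq v$; $T_A(u,Z)=\{v:T_A(u,Z,v)\}$; $U\to_{T_A}V=\{u:\forall Z\subseteq U,\ T_A(u,Z)\subseteq V\}$. For $a\in A$: $Q_a(u,v)$ iff $\{b\in A: a\to b\in u\}\subseteq v$; $Q_a(u)=\{v:Q_a(u,v)\}$; $[Q_a](X)=\{u:Q_a(u)\subseteq X\}$ for $X\subseteq\mathrm{Ul}(A)$. *)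

From mathcomp Require Import all_boot all_order.
Set Implicit Arguments. Unset Strict Implicit. Unset Printing Implicit Defensive.
Import Order.Theory.
Local Open Scope order_scope.

(* Boolean algebras are MathComp's complemented distributive lattices with
   top and bottom: ctbDistrLatticeType d. *)

Section CondAlg.
Context {disp : Order.disp_t} {A : ctbDistrLatticeType disp}.

Definition is_conditional (imp : A -> A -> A) : Prop :=
  [/\ forall a, imp a \top = \top,
      forall a b c, imp a b `&` imp a c = imp a (b `&` c)
    & forall a b c, imp (a `|` b) c <= imp a c `&` imp b c].

(* Filters (the improper filter A is allowed). *)
Definition is_filter (F : A -> Prop) : Prop :=
  [/\ F \top,
      forall a b, F a -> a <= b -> F b
    & forall a b, F a -> F b -> F (a `&` b)].

Definition is_ultrafilter (u : A -> Prop) : Prop :=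
  [/\ is_filter u, ~ u \bot &
      forall G, is_filter G -> ~ G \bot -> (forall a, u a -> G a) ->
        forall a, G a -> u a].

Definition Ul := {u : A -> Prop | is_ultrafilter u}.

Definition uset := Ul -> Prop.

Definition subU (X Y : uset) : Prop := forall u, X u -> Y u.

Definition phi (a : A) : uset := fun u => proj1_sig u a.
Definition phiF (F : A -> Prop) : uset :=
  fun u => forall x, F x -> proj1_sig u x.

Definition is_open (O : uset) : Prop :=
  forall u, O u -> exists b, phi b u /\ subU (phi b) O.
Definition is_closed (Y : uset) : Prop := is_open (fun u => ~ Y u).

Variable imp : A -> A -> A.

Definition Dimp (u : Ul) (F : A -> Prop) : A -> Prop :=
  fun b => exists a, F a /\ proj1_sig u (imp a b).

Definition TA (u : Ul) (Z : uset) (v : Ul) : Prop :=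
  exists F, is_filter F /\ (forall w, Z w <-> phiF F w) /\
            (forall b, Dimp u F b -> proj1_sig v b).

Definition arrT (U V : uset) : uset :=
  fun u => forall Z, subU Z U -> forall v, TA u Z v -> V v.

Definition Box (U V : uset) : uset := arrT U V.

Definition Qa (a : A) (u v : Ul) : Prop :=
  forall b, proj1_sig u (imp a b) -> proj1_sig v b.
Definition boxQ (a : A) (X : uset) : uset :=
  fun u => forall v, Qa a u v -> X v.

End CondAlg.

From mathcomp Require Import all_boot all_order.
From mathcomp Require Import boolp classical_sets.
Set Implicit Arguments. Unset Strict Implicit. Unset Printing Implicit Defensive.
Local Open Scope classical_set_scope.
Local Open Scope order_scope.
Import Order.Theory.

(* A T_A-successor of u through Z = phi(F) is an ultrafilter containing the
   filter D_u(F); for Z inside phi(a) these are exactly the Q_a-successors of u,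
   which gives (1).  For (2), a closed Y equals phi(F_Y), so u in Box_U(V) puts
   phi(D_u(F_Y)) inside V, hence inside any open O containing V; compactness of
   the Stone space then yields one b in D_u(F_Y) with phi(b) inside O, that is,
   a -> b in u for some a in F_Y.  Conversely, a T_A-successor v of u through
   Z outside V is excluded by testing the covering condition on Y = Z and the
   open set O = Ul(A) minus {v}. *)

Section StoneSpace.
Context {disp : Order.disp_t} {A : ctbDistrLatticeType disp}.
Implicit Types (F G D : A -> Prop) (a b c : A) (Y O : @uset _ A).

Definition meet_gen F c : A -> Prop := fun z => exists2 f, F f & f `&` c <= z.

Lemma meet_gen_filter F c : is_filter F -> is_filter (meet_gen F c).
Proof.
case=> F1 Fup FI; split.
- by exists \top => //; exact: lex1.
- by move=> a b [f Ff le] ab; exists f => //; exact: le_trans ab.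
- move=> a b [f Ff lf] [g Fg lg]; exists (f `&` g); first exact: FI.
  by rewrite lexI (le_trans _ lf) ?(le_trans _ lg) // leI2 ?leIl ?leIr.
Qed.

Lemma meet_gen_sub F c a : F a -> meet_gen F c a.
Proof. by exists a => //; exact: leIl. Qed.

Lemma meet_gen_gen F c : is_filter F -> meet_gen F c c.
Proof. by case=> F1 _ _; exists \top; rewrite ?meet1x. Qed.

Lemma meet_gen_bot F c : is_filter F -> meet_gen F c \bot -> F (~` c).
Proof. by case=> _ Fup _ [f Ff]; rewrite lex0 disj_leC; exact: Fup. Qed.

Lemma filter_bigcup_chain (C : set (set A)) :
  (forall H, C H -> H !=set0 -> is_filter H) -> total_on C subset ->
  (exists2 H, C H & H !=set0) -> is_filter (\bigcup_(H in C) H).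
Proof.
move=> Cf totC [H0 CH0 H0n]; split.
- by exists H0 => //; case: (Cf _ CH0 H0n).
- move=> a b [H CH Ha] ab; exists H => //.
  by case: (Cf _ CH (ex_intro _ _ Ha)) => _ Hup _; exact: Hup ab.
- move=> a b [H CH Ha] [K CK Kb].
  have [HK|KH] := totC _ _ CH CK.
  + exists K => //; case: (Cf _ CK (ex_intro _ _ Kb)) => _ _ KI.
    by apply: KI => //; exact: HK.
  + exists H => //; case: (Cf _ CH (ex_intro _ _ Ha)) => _ _ HI.
    by apply: HI => //; exact: KH.
Qed.

(* The empty set is admitted as a candidate so that Zorn's lemma also covers
   the empty chain. *)
Lemma ultrafilter_above G : is_filter G -> ~ G \bot ->
  exists w : Ul, forall a, G a -> phi a w.
Proof.
move=> fG nbG.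
pose P H := H = set0 \/ [/\ is_filter H, ~ H \bot & G `<=` H].
have [M [PM maxM]] : exists M, P M /\ forall H, M `<` H -> ~ P H.
  apply: Zorn_bigcup => C CP totC.
  have [Cn|noC] := pselect (exists2 H, C H & H !=set0); last first.
    left; apply/seteqP; split => // x [H CH Hx].
    by apply: noC; exists H => //; exists x.
  have CPf K : C K -> K !=set0 -> [/\ is_filter K, ~ K \bot & G `<=` K].
    by case/CP => [->[]|].
  right; split.
  - by apply: filter_bigcup_chain => // K CK /(CPf _ CK) [].
  - by case=> K CK Kb; have [] := CPf _ CK (ex_intro _ _ Kb).
  - case: Cn => H CH Hn a Ga; exists H => //.
    by have [_ _] := CPf _ CH Hn; apply.
have [fM nbM GM] : [/\ is_filter M, ~ M \bot & G `<=` M].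
  case: PM => [M0|//]; exfalso; apply: (maxM G); last by rewrite /P; right; split.
  by rewrite M0; split => // /(_ \top); case: fG => G1 _ _; apply.
have uM : is_ultrafilter M.
  split=> // H fH nbH MH a Ha; apply: contrapT => nMa.
  by apply: (maxM H); [split=> // /(_ a Ha) | right; split=> // b /GM /MH].
by exists (exist _ M uM) => a /GM.
Qed.

Section Ultrafilter.
Variable w : @Ul _ A.

Lemma ultra_filter : is_filter (proj1_sig w).
Proof. by case: (proj2_sig w). Qed.

Lemma phiT : phi \top w.
Proof. by case: ultra_filter. Qed.

Lemma phi0 : ~ phi \bot w.
Proof. by case: (proj2_sig w). Qed.

Lemma phi_le a b : a <= b -> phi a w -> phi b w.
Proof. by case: ultra_filter => _ up _ ab /up; apply. Qed.

Lemma phiI a b : phi a w -> phi b w -> phi (a `&` b) w.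
Proof. by case: ultra_filter => _ _; apply. Qed.

Lemma phiC a : phi (~` a) w <-> ~ phi a w.
Proof.
split=> [wCa wa|nwa]; first by apply: phi0; rewrite -(meetxC a); exact: phiI.
apply: contrapT => nwCa; apply: nwa; case: (proj2_sig w) => _ _ max.
apply: (max (meet_gen (proj1_sig w) a)); last exact: meet_gen_gen ultra_filter.
- exact: meet_gen_filter ultra_filter.
- by move=> /(meet_gen_bot ultra_filter).
- exact: meet_gen_sub.
Qed.

Lemma phiU a b : phi (a `|` b) w -> phi a w \/ phi b w.
Proof.
move=> wab; have [|/phiC wCa] := pselect (phi a w); [by left | right].
by apply: phi_le (phiI wab wCa); rewrite meetUl meetxC join0x leIl.
Qed.

End Ultrafilter.

Lemma Ul_sub_eq (w v : @Ul _ A) : (forall a, phi a w -> phi a v) -> w = v.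
Proof.
move=> wv; have e : proj1_sig w = proj1_sig v.
  apply/funext => a; apply/propext; split; first exact: wv.
  by case: (proj2_sig w) => _ _; apply; [exact: ultra_filter | exact: phi0 | ].
case: w v e {wv} => [w pw] [v pv] /= e; subst v.
by congr exist; exact: Prop_irrelevance.
Qed.

Lemma filter_sep F a : is_filter F -> subU (phiF F) (phi a) -> F a.
Proof.
move=> fF Fa; apply: contrapT => nFa.
have [w Gw] : exists w : Ul, forall b, meet_gen F (~` a) b -> phi b w.
  apply: ultrafilter_above; first exact: meet_gen_filter.
  by move/(meet_gen_bot fF); rewrite complK.
have /phiC : phi (~` a) w by apply/Gw/meet_gen_gen.
by apply; apply: Fa => b Fb; apply/Gw/meet_gen_sub.
Qed.

(* Compactness of the Stone space. *)
Lemma phiF_sub_open D O : is_filter D -> is_open O -> subU (phiF D) O ->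
  exists2 b, D b & subU (phi b) O.
Proof.
move=> fD oO DO; case: (fD) => D1 Dup DI.
pose G x := exists d b, [/\ D d, subU (phi b) O & d `&` ~` b <= x].
have fG : is_filter G.
  split.
  - by exists \top, \bot; split; [|move=> w /phi0|rewrite lex1].
  - by move=> x y [d [b [Dd Ob le]]] xy; exists d, b; split=> //; exact: le_trans xy.
  - move=> x y [d [b [Dd Ob le]]] [d' [b' [Dd' Ob' le']]].
    exists (d `&` d'), (b `|` b'); split; first exact: DI.
      by move=> w /phiU [/Ob|/Ob'].
    by rewrite complU lexI (le_trans _ le) ?(le_trans _ le') // leI2 ?leIl ?leIr.
have [[d [b [Dd Ob]]]|nbG] := pselect (G \bot).
  by rewrite lex0 disj_leC complK => db; exists b => //; exact: Dup db.
have [w Gw] := ultrafilter_above fG nbG.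
have [b [wb Ob]] : exists b, phi b w /\ subU (phi b) O.
  apply/oO/DO => d Dd; apply: Gw; exists d, \bot; split=> // [v /phi0|] //.
  by rewrite compl0 meetx1.
have /phiC : phi (~` b) w by apply: Gw; exists \top, b; rewrite ?meet1x.
by move/(_ wb).
Qed.

Lemma sub_phi_filter Y : is_filter (fun a => subU Y (phi a)).
Proof.
split=> [w _|a b Ya ab w /Ya|a b Ya Yb w Yw]; first exact: phiT.
- exact: phi_le.
- by apply: phiI; [apply: Ya | apply: Yb].
Qed.

Lemma closed_phiF Y : is_closed Y ->
  forall w, Y w <-> phiF (fun a => subU Y (phi a)) w.
Proof.
move=> cY w; split=> [Yw a|YF]; first exact.
apply: contrapT => /cY [b [wb bY]]; apply/(phiC w b): wb; apply: YF => v Yv.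
by apply/phiC => /bY.
Qed.

Lemma phiF_closed F : is_closed (phiF F).
Proof.
move=> w nFw; have [a Fa nwa] : exists2 a, F a & ~ phi a w.
  apply: contrapT => nex; apply: nFw => a Fa.
  by apply: contrapT => nwa; apply: nex; exists a.
by exists (~` a); split=> [|v /phiC vCa /(_ a Fa)]; first exact/phiC.
Qed.

Lemma open_neq (v : @Ul _ A) : is_open (fun w => w <> v).
Proof.
move=> w nwv; have [a wa nva] : exists2 a, phi a w & ~ phi a v.
  apply: contrapT => nex; apply: nwv; apply: Ul_sub_eq => a wa.
  by apply: contrapT => nva; apply: nex; exists a.
by exists a; split=> // w' w'a e; subst w'.
Qed.

End StoneSpace.

Section ConditionalAlgebra.
Context {disp : Order.disp_t} {A : ctbDistrLatticeType disp}.
Variable imp : A -> A -> A.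
Hypothesis imp_cond : is_conditional imp.

Lemma imp_monor a b c : b <= c -> imp a b <= imp a c.
Proof. by case: imp_cond => _ impI _ bc; rewrite -(meet_l bc) -impI leIr. Qed.

Lemma imp_antil a a' c : a <= a' -> imp a' c <= imp a c.
Proof.
case: imp_cond => _ _ impU aa'; have := impU a a' c; rewrite join_r // => le.
exact: le_trans le (leIl _ _).
Qed.

Lemma Dimp_filter (u : Ul) F : is_filter F -> is_filter (Dimp imp u F).
Proof.
case=> F1 Fup FI; split.
- by exists \top; split=> //; case: imp_cond => -> _ _; exact: phiT.
- move=> a b [x [Fx ux]] ab; exists x; split=> //.
  exact: phi_le (imp_monor _ ab) ux.
- move=> a b [x [Fx ux]] [y [Fy uy]]; exists (x `&` y); split; first exact: FI.
  case: imp_cond => _ <- _; apply: phiI.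
  + exact: phi_le (imp_antil _ (leIl x y)) ux.
  + exact: phi_le (imp_antil _ (leIr y x)) uy.
Qed.

Lemma TA_Qa (u v : Ul) Z a : TA imp u Z v -> subU Z (phi a) -> Qa imp a u v.
Proof.
move=> [F [fF [ZF Dv]]] Za b uab; apply: Dv; exists a; split=> //.
by apply: filter_sep => // w /ZF /Za.
Qed.

Lemma Qa_TA (u v : Ul) a : Qa imp a u v -> TA imp u (phi a) v.
Proof.
move=> Q; exists (fun x => a <= x); split; [split|split].
- exact: lex1.
- by move=> x y ax xy; exact: le_trans xy.
- by move=> x y ax ay; rewrite lexI ax ay.
- by move=> w; split=> [wa x ax|/(_ a (lexx a))]; first exact: phi_le ax wa.
- by move=> b [x [ax uxb]]; apply: Q; exact: phi_le (imp_antil _ ax) uxb.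
Qed.

Lemma boxQE a X (u : Ul) : boxQ imp a X u <-> Box imp (phi a) X u.
Proof.
split=> [h Z Za v /TA_Qa Q|h v Q]; first by apply/h/Q.
exact: h (Qa_TA Q).
Qed.

Lemma Box_phi_boxQ a b O (u : Ul) :
  subU (phi b) O -> Box imp (phi a) (phi b) u -> boxQ imp a O u.
Proof. by move=> bO /boxQE h v /h /bO. Qed.

Lemma Box_basic_cover U V (u : Ul) Y O : Box imp U V u ->
  is_closed Y -> subU Y U -> is_open O -> subU V O ->
  exists a b, subU Y (phi a) /\ subU (phi b) O /\ Box imp (phi a) (phi b) u.
Proof.
move=> hB cY YU oO VO; pose FY a := subU Y (phi a).
have DO : subU (phiF (Dimp imp u FY)) O.
  move=> v Dv; apply/VO/(hB Y YU); exists FY.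
  by split; [exact: sub_phi_filter | split=> //; exact: closed_phiF].
have [b [a [FYa uab]] bO] := phiF_sub_open (Dimp_filter u (sub_phi_filter Y)) oO DO.
by exists a, b; split=> //; split=> //; apply/boxQE => v; apply.
Qed.

Lemma Box_of_boxQ_cover U V (u : Ul) :
  (forall Y O, is_closed Y -> subU Y U -> is_open O -> subU V O ->
     exists a, subU Y (phi a) /\ boxQ imp a O u) -> Box imp U V u.
Proof.
move=> cover Z ZU v uZv; apply: contrapT => nVv.
have cZ : is_closed Z.
  case: uZv => F [_ [ZF _]].
  have -> : Z = phiF F by apply/funext => w; apply/propext; exact: ZF.
  exact: phiF_closed.
have V_neq_v : subU V (fun w => w <> v) by move=> w Vw wv; apply: nVv; rewrite -wv.
have [a [Za Qa_sub]] := cover Z _ cZ ZU (open_neq (v:=v)) V_neq_v.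
exact: Qa_sub (TA_Qa uZv Za) erefl.
Qed.

End ConditionalAlgebra.

Theorem theorem3p9 (disp : Order.disp_t) (A : ctbDistrLatticeType disp)
  (imp : A -> A -> A) (Hc : is_conditional imp) :
  (forall (a : A) (X : @uset _ A) (u : Ul),
     boxQ imp a X u <-> Box imp (phi a) X u) /\
  (forall (U V : @uset _ A) (u : Ul),
     (Box imp U V u <->
       (forall Y O : uset, is_closed Y -> subU Y U -> is_open O -> subU V O ->
          exists a b, subU Y (phi a) /\ subU (phi b) O /\
                      Box imp (phi a) (phi b) u)) /\
     (Box imp U V u <->
       (forall Y O : uset, is_closed Y -> subU Y U -> is_open O -> subU V O ->
          exists a, subU Y (phi a) /\ boxQ imp a O u))).
Proof.
split=> [a X u|U V u]; first exact: boxQE.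
have basic_boxQ Y O :
    (exists a b, subU Y (phi a) /\ subU (phi b) O /\ Box imp (phi a) (phi b) u) ->
    exists a, subU Y (phi a) /\ boxQ imp a O u.
  by case=> a [b [Ya [bO Bab]]]; exists a; split=> //; exact: Box_phi_boxQ Bab.
split; split=> [hB Y O cY YU oO VO|h].
- exact: (Box_basic_cover Hc hB cY YU oO VO).
- by apply: Box_of_boxQ_cover => // Y O cY YU oO VO; apply/basic_boxQ/h.
- exact: basic_boxQ (Box_basic_cover Hc hB cY YU oO VO).
- exact: Box_of_boxQ_cover.
Qed.
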